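(* Let $a,b>0$ and $1\le k<m\le n-1$ be integers with $a^m\neq b^k$. Then there exists a finite set $\mathcal{F}=\mathcal{F}_{a,b,k,m}\subset\mathbb{R}$, depending only on $a,b,k,m$, such that the following holds: if $x_1,\dots,x_n$ are nonnegative and $y_1,\dots,y_n$ are positive real numbers such that $$x_I+y_I=2a\quad\text{and}\quad x_J+y_J=2b$$ whenever $I,J\subset\{1,\dots,n\}$, $|I|=k$ and $|J|=m$, then $y_1,\dots,y_n\in\mathcal{F}$.
   Context: For real numbers $x_1,\dots,x_n$ and $I\subset\{1,\dots,n\}$, $x_I:=\prod_{\iota\in I}x_\iota$ (with $x_\emptyset=1$); $|I|$ is the cardinality of $I$. *)

From mathcomp Require Import all_boot all_order all_algebra.
From mathcomp Require Export reals.
Set Implicit Arguments. Unset Strict Implicit. Unset Printing Implicit Defensive.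
Import Order.TTheory GRing.Theory Num.Theory.
Local Open Scope ring_scope.

Definition prodI (R : realType) (n : nat) (x : 'I_n -> R) (I : {set 'I_n}) : R :=
  \prod_(i in I) x i.

From mathcomp Require Import all_boot all_order all_algebra.
From mathcomp Require Import reals polyrcf.
From mathcomp Require Import zify ring lra.
Import Order.TTheory GRing.Theory Num.Theory.
Set Implicit Arguments. Unset Strict Implicit. Unset Printing Implicit Defensive.
Local Open Scope ring_scope.

(* If [y] is constant, equal to [t], then every [k]-product of [x] is
   [2a - t^k] and every [m]-product is [2b - t^m], which forces
   [(2a - t^k)^m = (2b - t^m)^k]: [t] is a root of a fixed nonzero polynomial.
   Otherwise take [y_i <> y_j] and an [(m-1)]-set [L] avoiding [i] and [j].
   Subtracting the level equations on [i |: K] and [j |: K] gives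
   [x_K (x_i - x_j) = y_K (y_j - y_i)] for [K] in [L] of size [k-1] or [m-1].
   For [k >= 2] this makes [x] and [y] constant and equal on [L], whence
   [a^m = b^k]. For [k = 1] we have [x_l = 2a - y_l], [y] takes only the values
   [y_i] and [y_j] on [L], and the two multiplicities [P + Q = m - 1] express
   [y_i] through a root of a nonzero polynomial depending on [a, b, P, Q]. *)

Lemma exists_subset_card (T : finType) (A : {set T}) h :
  (h <= #|A|)%N -> exists2 K : {set T}, K \subset A & #|K| = h.
Proof.
move=> hA; exists [set t in take h (enum A)].
  by apply/subsetP => t; rewrite inE => /mem_take; rewrite mem_enum.
by rewrite cardsE (card_uniqP _) ?take_uniq ?enum_uniq // size_takel -?cardE.
Qed.

Lemma exists_card_mem (T : finType) (t : T) h :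
  (0 < h <= #|T|)%N -> exists2 K : {set T}, t \in K & #|K| = h.
Proof.
case/andP => h_gt0 h_le.
have [K KC cK] : exists2 K : {set T}, K \subset [set~ t] & #|K| = h.-1.
  by apply: exists_subset_card; rewrite cardsC1; lia.
have tK : t \notin K by apply/negP => /(subsetP KC); rewrite !inE eqxx.
by exists (t |: K); rewrite ?setU11 // cardsU1 tK cK; lia.
Qed.

Lemma prod_subsets_const (R : idomainType) (T : finType) (g : T -> R)
    (L : {set T}) h c :
  (0 < h < #|L|)%N -> {in L, forall l, g l != 0} ->
  (forall K : {set T}, K \subset L -> #|K| = h -> \prod_(l in K) g l = c) ->
  {in L &, forall l l', g l = g l'}.
Proof.
move=> /andP [h_gt0 h_lt] g_neq0 gK l l' lL l'L.
have [-> // | ll'] := eqVneq l l'.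
have ll'L : [set l; l'] \subset L by rewrite subUset !sub1set lL l'L.
have [K0 K0sub cK0] :
    exists2 K0 : {set T}, K0 \subset L :\: [set l; l'] & #|K0| = h.-1.
  by apply: exists_subset_card; rewrite cardsD (setIidPr ll'L) cards2 ll'; lia.
have K0L : K0 \subset L by apply: subset_trans K0sub (subsetDl _ _).
have [lK0 l'K0] : l \notin K0 /\ l' \notin K0.
  by split; apply/negP => /(subsetP K0sub); rewrite !inE eqxx ?orbT.
have prodK0_neq0 : \prod_(t in K0) g t != 0.
  by apply/prodf_neq0 => t /(subsetP K0L) /g_neq0.
have gK0 t : t \in L -> t \notin K0 -> g t * \prod_(u in K0) g u = c.
  move=> tL tK0; rewrite -big_setU1 //= gK // ?subUset ?sub1set ?tL //.
  by rewrite cardsU1 tK0 cK0; lia.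
by apply: (mulIf prodK0_neq0); rewrite !gK0.
Qed.

Lemma prod_levels_exp (R : idomainType) (T : finType) (g : T -> R) k m c d :
  (0 < k < m)%N -> (m <= #|T|)%N ->
  (forall I : {set T}, #|I| = k -> \prod_(t in I) g t = c) ->
  (forall J : {set T}, #|J| = m -> \prod_(t in J) g t = d) ->
  c ^+ m = d ^+ k.
Proof.
move=> /andP [k_gt0 k_lt_m] m_le gk gm.
have [/existsP [t /eqP gt0] | /existsPn g_neq0] := boolP [exists t, g t == 0].
  have [I tI cI] : exists2 I : {set T}, t \in I & #|I| = k.
    by apply: exists_card_mem; lia.
  have [J tJ cJ] : exists2 J : {set T}, t \in J & #|J| = m.
    by apply: exists_card_mem; lia.
  rewrite -(gk I cI) -(gm J cJ) (bigD1 t tI) (bigD1 t tJ) /= gt0 !mul0r !expr0n.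
  by rewrite !gtn_eqF // (ltn_trans k_gt0).
have T_gt0 : (0 < #|T|)%N by lia.
have [t _] := card_gt0P T_gt0.
have g_const : {in [set: T] &, forall u v, g u = g v}.
  apply: (@prod_subsets_const _ _ _ _ k c) => [||K _]; last exact: gk.
    by rewrite cardsT k_gt0; lia.
  by move=> u _; apply: g_neq0.
have prod_const (K : {set T}) : \prod_(u in K) g u = g t ^+ #|K|.
  by rewrite -prodr_const; apply: eq_bigr => u _; apply: g_const; rewrite inE.
have [I _ cI] := @exists_subset_card _ [set: T] k ltac:(rewrite cardsT; lia).
have [J _ cJ] := @exists_subset_card _ [set: T] m ltac:(rewrite cardsT; lia).
by rewrite -(gk I cI) -(gm J cJ) !prod_const cI cJ -!exprM mulnC.
Qed.

Lemma coef1_CsubX_exp (R : comNzRingType) (c : R) m :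
  ((c%:P - 'X) ^+ m)`_1 = c ^+ m.-1 *- m.
Proof.
have := coef_deriv ((c%:P - 'X) ^+ m) 0; rewrite mulr1n => <-.
rewrite -horner_coef0 deriv_exp derivB derivC derivX sub0r.
by rewrite hornerMn hornerM !hornerE subr0 mulN1r mulNrn.
Qed.

Lemma CsubXn_exp_comp (R : comNzRingType) (c : R) k m :
  (c%:P - 'X^k) ^+ m = (c%:P - 'X) ^+ m \Po 'X^k.
Proof. by rewrite rmorphXn /= comp_polyB comp_polyC comp_polyX. Qed.

Definition constant_y_poly (R : comNzRingType) (a b : R) k m : {poly R} :=
  ((2 * a)%:P - 'X^k) ^+ m - ((2 * b)%:P - 'X^m) ^+ k.

(* Its [X^k] coefficient is [-m (2a)^(m-1)]: [X^m] does not divide [X^k]. *)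
Lemma constant_y_poly_neq0 (R : numDomainType) (a b : R) k m :
  0 < a -> (0 < k < m)%N -> constant_y_poly a b k m != 0.
Proof.
move=> a_gt0 /andP [k_gt0 k_lt_m]; have m_gt0 := ltn_trans k_gt0 k_lt_m.
apply/eqP => /(congr1 (coefp k)) /=.
rewrite /constant_y_poly !CsubXn_exp_comp coefB !coef_comp_poly_Xn //.
rewrite dvdnn divnn k_gt0 coef1_CsubX_exp (gtnNdvd k_gt0 k_lt_m) coef0 subr0.
apply/eqP; rewrite oppr_eq0 mulrn_eq0 negb_or -lt0n m_gt0 /=.
by rewrite expf_eq0 mulf_eq0 pnatr_eq0 (gt_eqF a_gt0) andbF.
Qed.

Definition two_value_poly (R : comNzRingType) (a be : R) P Q : {poly R} :=
  be%:P * (1 + 'X^Q) ^+ P * (1 + 'X^P) ^+ Q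
  - ((2 * a) ^+ (P + Q))%:P * 'X^(P * Q).

Definition two_value_y (R : fieldType) (a : R) Q (z : R) : R :=
  2 * a * z ^+ Q / (1 + z ^+ Q).

Lemma two_value_poly_neq0 (R : comNzRingType) (a be : R) P Q :
  be != 0 -> (0 < P)%N -> (0 < Q)%N -> two_value_poly a be P Q != 0.
Proof.
move=> be_neq0 P_gt0 Q_gt0; apply: contraNneq be_neq0 => /(congr1 (horner^~ 0)).
rewrite /two_value_poly !hornerE !expr0n !gtn_eqF ?muln_gt0 ?P_gt0 //=.
by rewrite !addr0 !expr1n !mulr1 mulr0 subr0 => ->.
Qed.

Lemma root_mem_rootsR (R : rcfType) (p : {poly R}) z :
  p != 0 -> root p z -> z \in rootsR p.
Proof.
by move=> p_neq0 pz; rewrite -(roots_on_rootsR p_neq0) pz andbT in_itv.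
Qed.

Lemma exists_nonneg_root (R : rcfType) (t : R) N :
  0 <= t -> (0 < N)%N -> exists2 z : R, 0 <= z & z ^+ N = t.
Proof.
move=> t_ge0 N_gt0.
have t1_ge0 : 0 <= 1 + t by rewrite addr_ge0.
have sign_change : ('X^N - t%:P).[0] <= 0 <= ('X^N - t%:P).[1 + t].
  rewrite !hornerE expr0n gtn_eqF //= sub0r oppr_le0 t_ge0 /= subr_ge0.
  by apply: le_trans (ler_eXnr _ _) => //; [rewrite lerDr | rewrite lerDl].
have [z /andP [z_ge0 _]] := poly_ivt t1_ge0 sign_change.
by rewrite /root !hornerE subr_eq0 => /eqP; exists z.
Qed.

Lemma eq_expn_midpoint (R : realDomainType) (a u v : R) N :
  (0 < N)%N -> 0 <= u -> 0 <= v -> u + v = 2 * a -> u ^+ N = v ^+ N -> u = a.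
Proof. by move=> N_gt0 u_ge0 v_ge0 uv /eqP; rewrite eqrXn2 // => /eqP; lra. Qed.

(* Writing [v = z^Q u] forces [u' = z^P v'], and then [u + v = u' + v' = 2a]
   turns [v^P v'^Q = be] into a polynomial equation in [z]. *)
Lemma two_value_param (R : rcfType) (a be u v u' v' : R) P Q :
  (0 < P)%N -> (0 < Q)%N -> 0 < be ->
  0 <= u -> 0 < v -> 0 <= u' -> 0 < v' ->
  u + v = 2 * a -> u' + v' = 2 * a ->
  u ^+ P * u' ^+ Q = be -> v ^+ P * v' ^+ Q = be ->
  exists2 z, root (two_value_poly a be P Q) z & v = two_value_y a Q z.
Proof.
move=> P_gt0 Q_gt0 be_gt0 u_ge0 v_gt0 u'_ge0 v'_gt0 uv uv' u_be v_be.
have u_gt0 : 0 < u.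
  rewrite lt_def u_ge0 andbT; apply: contra_eqN u_be => /eqP ->.
  by rewrite expr0n gtn_eqF // mul0r eq_sym (gt_eqF be_gt0).
have [z z_ge0 zQ] := exists_nonneg_root (divr_ge0 (ltW v_gt0) (ltW u_gt0)) Q_gt0.
have v_zu : v = z ^+ Q * u by rewrite zQ divfK ?gt_eqF.
have u'_zv' : u' = z ^+ P * v'.
  apply/eqP; rewrite -(eqrXn2 Q_gt0) // ?mulr_ge0 ?exprn_ge0 ?(ltW v'_gt0) //.
  apply/eqP; apply: (mulfI (expf_neq0 P (lt0r_neq0 u_gt0))).
  by rewrite u_be -v_be v_zu !exprMn -!exprM mulnC; ring.
have u_2a : u * (1 + z ^+ Q) = 2 * a by rewrite -uv v_zu; ring.
have v'_2a : v' * (1 + z ^+ P) = 2 * a by rewrite -uv' u'_zv'; ring.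
exists z.
  rewrite /root /two_value_poly !hornerE -v_be exprD -{1}u_2a -v'_2a v_zu.
  by apply/eqP; rewrite exprM !exprMn (exprAC z Q P); ring.
rewrite /two_value_y v_zu -u_2a; field.
by rewrite gt_eqF // ltr_pwDl // exprn_ge0.
Qed.

Lemma prodI_setU1 (R : realType) n (g : 'I_n -> R) i (K : {set 'I_n}) :
  i \notin K -> prodI g (i |: K) = g i * prodI g K.
Proof. exact: big_setU1. Qed.

Lemma prodI_gt0 (R : realType) n (g : 'I_n -> R) (K : {set 'I_n}) :
  (forall l, 0 < g l) -> 0 < prodI g K.
Proof. by move=> g_gt0; apply: prodr_gt0. Qed.

Lemma prodI_const (R : realType) n (g : 'I_n -> R) (K : {set 'I_n}) s :
  {in K, forall l, g l = s} -> prodI g K = s ^+ #|K|.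
Proof. by move=> gK; rewrite /prodI -prodr_const; apply: eq_bigr. Qed.

Section Level.

Variables (R : realType) (n h : nat) (c : R) (x y : 'I_n -> R).
Hypothesis level :
  forall I : {set 'I_n}, #|I| = h -> prodI x I + prodI y I = c.

Lemma level_setU1 i (K : {set 'I_n}) :
  i \notin K -> #|K|.+1 = h -> x i * prodI x K + y i * prodI y K = c.
Proof. by move=> iK cK; rewrite -!prodI_setU1 // level // cardsU1 iK. Qed.

Lemma level_swap i j (K : {set 'I_n}) :
  i \notin K -> j \notin K -> #|K|.+1 = h ->
  prodI x K * (x i - x j) = prodI y K * (y j - y i).
Proof.
move=> iK jK cK; have := level_setU1 iK cK; have := level_setU1 jK cK; lra.
Qed.

End Level.

Section Configuration.

Variables (R : realType) (a b : R) (k m n : nat) (x y : 'I_n -> R).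
Hypotheses (a_gt0 : 0 < a) (b_gt0 : 0 < b) (k_gt0 : (0 < k)%N)
  (k_lt_m : (k < m)%N) (m_lt_n : (m < n)%N) (am_neq_bk : a ^+ m != b ^+ k)
  (x_ge0 : forall i, 0 <= x i) (y_gt0 : forall i, 0 < y i)
  (level_k : forall I : {set 'I_n}, #|I| = k -> prodI x I + prodI y I = 2 * a)
  (level_m : forall J : {set 'I_n}, #|J| = m -> prodI x J + prodI y J = 2 * b).

Lemma root_constant_y t :
  (forall i, y i = t) -> root (constant_y_poly a b k m) t.
Proof.
move=> yt; have prodI_y K : prodI y K = t ^+ #|K| by apply: prodI_const.
rewrite /root /constant_y_poly !hornerE.
rewrite (@prod_levels_exp _ _ x k m (2 * a - t ^+ k) (2 * b - t ^+ m)) ?subrr //.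
- by rewrite k_gt0 k_lt_m.
- by rewrite card_ord ltnW.
- by move=> I cI; rewrite -(level_k cI) prodI_y cI addrK.
- by move=> J cJ; rewrite -(level_m cJ) prodI_y cJ addrK.
Qed.

Lemma exists_subset_avoid2 (i j : 'I_n) : i != j ->
  exists L : {set 'I_n}, [/\ i \notin L, j \notin L & #|L| = m.-1].
Proof.
move=> ij.
have [L LC cL] : exists2 L : {set 'I_n}, L \subset ~: [set i; j] & #|L| = m.-1.
  by apply: exists_subset_card; rewrite cardsCs setCK cards2 ij card_ord; lia.
by exists L; split=> //; apply/negP => /(subsetP LC); rewrite !inE eqxx ?orbT.
Qed.

Section Pair.

Variables (i j : 'I_n) (L : {set 'I_n}).
Hypotheses (iL : i \notin L) (jL : j \notin L) (cardL : #|L| = m.-1)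
  (y_ij : y i != y j).

Let notin_sub l (K : {set 'I_n}) : K \subset L -> l \notin L -> l \notin K.
Proof. by move=> KL; apply: contra; apply: (subsetP KL). Qed.

Let cardL1 : #|L|.+1 = m.
Proof. by rewrite cardL prednK // (ltn_trans k_gt0). Qed.

Lemma swap_L : prodI x L * (x i - x j) = prodI y L * (y j - y i).
Proof. exact: (level_swap level_m iL jL cardL1). Qed.

Lemma swap_sub (K : {set 'I_n}) : K \subset L -> #|K| = k.-1 ->
  prodI x K * (x i - x j) = prodI y K * (y j - y i).
Proof.
move=> KL cK; apply: (level_swap level_k); rewrite ?cK ?prednK //.
  exact: notin_sub KL iL.
exact: notin_sub KL jL.
Qed.

Lemma x_neq0_on_L : {in L, forall l, x l != 0}.
Proof.
apply/prodf_neq0/eqP => xL0; move: swap_L; rewrite (_ : prodI x L = 0) // mul0r.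
move/esym/eqP; rewrite mulf_eq0 (gt_eqF (prodI_gt0 L y_gt0)) subr_eq0 eq_sym.
exact/negP.
Qed.

Lemma exists_sub_L h : (h <= m.-1)%N ->
  exists2 K : {set 'I_n}, K \subset L & #|K| = h.
Proof. by move=> h_le; apply: exists_subset_card; rewrite cardL. Qed.

Section KGt1.

Hypothesis k_gt1 : (1 < k)%N.

(* Through [swap_sub], [y_K] is proportional to [x_K] on [(k-1)]-subsets [K]
   of [L], so [level_k] on [i |: K] fixes [x_K]. *)
Lemma const_on_L :
  {in L &, forall l l', x l = x l'} /\ {in L &, forall l l', y l = y l'}.
Proof.
set D := x i - x j; set E := y j - y i.
have E_neq0 : E != 0 by rewrite subr_eq0 eq_sym.
set c := x i + y i * D / E.
have yK (K : {set 'I_n}) :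
    K \subset L -> #|K| = k.-1 -> prodI y K = prodI x K * D / E.
  by move=> KL cK; rewrite (swap_sub KL cK) mulfK.
have xK_c (K : {set 'I_n}) :
    K \subset L -> #|K| = k.-1 -> prodI x K * c = 2 * a.
  move=> KL cK; have cK1 : #|K|.+1 = k by rewrite cK prednK.
  by rewrite -(level_setU1 level_k (notin_sub KL iL) cK1) yK // /c; field.
have [K0 K0L cK0] : exists2 K0 : {set 'I_n}, K0 \subset L & #|K0| = k.-1.
  by apply: exists_sub_L; lia.
have c_neq0 : c != 0.
  apply: contra_eqN (xK_c K0 K0L cK0) => /eqP ->.
  by rewrite mulr0 eq_sym mulf_neq0 ?gt_eqF.
have k1_bounds : (0 < k.-1 < #|L|)%N by rewrite cardL; lia.
split.
  apply: (prod_subsets_const (h := k.-1) (c := 2 * a / c)) => // [|K KL cK].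
    exact: x_neq0_on_L.
  by rewrite -(xK_c K KL cK) mulfK.
apply: (prod_subsets_const (h := k.-1) (c := 2 * a / c * D / E))
  => // [l _|K KL cK].
  by rewrite gt_eqF.
by rewrite -(xK_c K KL cK) mulfK // -yK.
Qed.

Lemma k_gt1_contra : False.
Proof.
have [x_const y_const] := const_on_L.
have [l0 l0L] : exists l0, l0 \in L by apply/card_gt0P; rewrite cardL; lia.
set s := x l0; set t := y l0.
have s_gt0 : 0 < s by rewrite lt0r x_ge0 andbT x_neq0_on_L.
have xK (K : {set 'I_n}) : K \subset L -> prodI x K = s ^+ #|K|.
  by move=> KL; apply: prodI_const => l /(subsetP KL) lL; apply: x_const.
have yK (K : {set 'I_n}) : K \subset L -> prodI y K = t ^+ #|K|.
  by move=> KL; apply: prodI_const => l /(subsetP KL) lL; apply: y_const.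
have [K0 K0L cK0] : exists2 K0 : {set 'I_n}, K0 \subset L & #|K0| = k.-1.
  by apply: exists_sub_L; lia.
have [I0 I0L cI0] : exists2 I0 : {set 'I_n}, I0 \subset L & #|I0| = k.
  by apply: exists_sub_L; lia.
have swap_K0 := swap_sub K0L cK0; rewrite xK // yK // cK0 in swap_K0.
(* Dividing the swap identity on [L] by the one on [K0] gives
   [s^(m-k) = t^(m-k)]. *)
have st : s = t.
  have X_neq0 : t ^+ k.-1 * (y j - y i) != 0.
    by rewrite mulf_neq0 ?expf_neq0 ?(gt_eqF (y_gt0 l0)) // subr_eq0 eq_sym.
  have m1E : m.-1 = (k.-1 + (m - k))%N by lia.
  have := swap_L; rewrite xK // yK // cardL m1E.
  rewrite !exprD (mulrC (s ^+ k.-1)) (mulrC (t ^+ k.-1)) -!mulrA swap_K0.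
  move=> /(mulIf X_neq0) /eqP.
  by rewrite eqrXn2 ?subn_gt0 ?(ltW s_gt0) ?(ltW (y_gt0 l0)) // => /eqP.
have s_k : s ^+ k = a by have := level_k cI0; rewrite xK // yK // cI0 -st; lra.
have cK0S : #|K0|.+1 = k by rewrite cK0 prednK.
have sum_i : x i + y i = 2 * s.
  apply: (mulfI (expf_neq0 k.-1 (lt0r_neq0 s_gt0))).
  have := level_setU1 level_k (notin_sub K0L iL) cK0S.
  rewrite xK // yK // cK0 -st mulrCA -exprSr prednK // s_k; lra.
have s_m : s ^+ m = b.
  have := level_setU1 level_m iL cardL1.
  rewrite xK // yK // cardL -st -mulrDl sum_i.
  rewrite -[in s ^+ m](prednK (ltn_trans k_gt0 k_lt_m)) exprSr; lra.
by move/eqP: am_neq_bk; apply; rewrite -s_k -s_m -!exprM mulnC.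
Qed.

End KGt1.

End Pair.

Lemma y_const_of_k_gt1 : (1 < k)%N -> forall i j, y i = y j.
Proof.
move=> k_gt1 i j; apply/eqP/contraT => y_ij.
have ij : i != j by apply: contraNneq y_ij => ->.
have [L [iL jL cardL]] := exists_subset_avoid2 ij.
by case: (k_gt1_contra iL jL cardL y_ij k_gt1).
Qed.

Section KEq1.

Hypothesis k_eq1 : k = 1%N.

Lemma x_add_y l : x l + y l = 2 * a.
Proof.
by have := level_k (etrans (cards1 l) (esym k_eq1)); rewrite /prodI !big_set1.
Qed.

Lemma prodI_avoid2 (i j : 'I_n) (L : {set 'I_n}) :
  y i != y j -> i \notin L -> j \notin L -> #|L| = m.-1 ->
  prodI x L = b / a /\ prodI y L = b / a.
Proof.
move=> y_ij iL jL cardL.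
have D_E : x i - x j = y j - y i by have := x_add_y i; have := x_add_y j; lra.
have E_neq0 : y j - y i != 0 by rewrite subr_eq0 eq_sym.
have xL_yL : prodI x L = prodI y L.
  by apply: (mulIf E_neq0); rewrite -{1}D_E (swap_L iL jL cardL).
have cLS : #|L|.+1 = m by rewrite cardL prednK // (ltn_trans k_gt0).
have := level_setU1 level_m iL cLS; rewrite -xL_yL -mulrDl x_add_y => xL.
suff -> : prodI x L = b / a by [].
by apply: (mulIf (lt0r_neq0 a_gt0)); rewrite divfK ?gt_eqF //; lra.
Qed.

(* Exchanging [l] for [j] in [L] keeps the product of [x] equal to [b / a]. *)
Lemma y_two_valued (i j : 'I_n) (L : {set 'I_n}) :
  y i != y j -> i \notin L -> j \notin L -> #|L| = m.-1 ->
  {in L, forall l, y l != y i -> y l = y j}.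
Proof.
move=> y_ij iL jL cardL l lL y_li.
set L' := j |: (L :\ l).
have jLl : j \notin L :\ l by rewrite !inE (negbTE jL) andbF.
have iL' : i \notin L'.
  by rewrite !inE (negbTE iL) andbF orbF; apply: contraNneq y_ij => ->.
have lL' : l \notin L'.
  by rewrite !inE eqxx /= orbF; apply: contraNneq jL => <-.
have cardL' : #|L'| = m.-1 by rewrite cardsU1 jLl -cardL (cardsD1 l L) lL.
have y_il : y i != y l by rewrite eq_sym.
have [xL' _] := prodI_avoid2 y_il iL' lL' cardL'.
have [xL _] := prodI_avoid2 y_ij iL jL cardL.
have ba_neq0 : b / a != 0 by rewrite mulf_neq0 ?invr_eq0 ?gt_eqF.
have xLl_neq0 : prodI x (L :\ l) != 0.
  by apply: contraNneq ba_neq0 => xLl0; rewrite -xL' prodI_setU1 // xLl0 mulr0.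
have x_lj : x l = x j.
  have lLl : l \notin L :\ l by rewrite !inE eqxx.
  by apply: (mulIf xLl_neq0); rewrite -!prodI_setU1 // setD1K // xL.
by have := x_add_y l; have := x_add_y j; lra.
Qed.

Lemma two_value_exponents (i j : 'I_n) : y i != y j ->
  exists P Q, [/\ (P + Q = m.-1)%N, x i ^+ P * x j ^+ Q = b / a
                & y i ^+ P * y j ^+ Q = b / a].
Proof.
move=> y_ij; have ij : i != j by apply: contraNneq y_ij => ->.
have [L [iL jL cardL]] := exists_subset_avoid2 ij.
set A := L :&: [set l | y l == y i]; set B := L :\: [set l | y l == y i].
have y_A : {in A, forall l, y l = y i}.
  by move=> l; rewrite !inE => /andP [_ /eqP].
have y_B : {in B, forall l, y l = y j}.
  move=> l; rewrite !inE => /andP [y_li lL].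
  exact: (y_two_valued y_ij iL jL cardL lL y_li).
have x_of_y l l' : y l = y l' -> x l = x l'.
  by move=> yl; have := x_add_y l; have := x_add_y l'; lra.
have split_L g : prodI g L = prodI g A * prodI g B by apply: big_setID.
have [xL yL] := prodI_avoid2 y_ij iL jL cardL.
exists #|A|, #|B|; split.
- by rewrite -cardL -(cardsID [set l | y l == y i] L).
- rewrite -xL split_L (@prodI_const _ _ _ A (x i)) ?(@prodI_const _ _ _ B (x j)) //.
    by move=> l /y_B /x_of_y.
  by move=> l /y_A /x_of_y.
- by rewrite -yL split_L (prodI_const y_A) (prodI_const y_B).
Qed.

Lemma two_value_root (i j : 'I_n) : y i != y j ->
  exists P Q, [/\ (0 < P)%N, (0 < Q)%N, (P + Q = m.-1)%N &
    exists2 z, root (two_value_poly a (b / a) P Q) z & y i = two_value_y a Q z].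
Proof.
move=> y_ij; have [P [Q [PQ x_PQ y_PQ]]] := two_value_exponents y_ij.
have m1_gt0 : (0 < m.-1)%N by lia.
have ba_gt0 : 0 < b / a by rewrite divr_gt0.
have single_value l : x l ^+ m.-1 = b / a -> y l ^+ m.-1 = b / a -> False.
  move=> xl yl; have xl_a : x l = a.
    apply: eq_expn_midpoint m1_gt0 (x_ge0 l) (ltW (y_gt0 l)) (x_add_y l) _.
    by rewrite xl yl.
  move/eqP: am_neq_bk; apply; rewrite k_eq1 expr1.
  rewrite -[m](prednK (ltn_trans k_gt0 k_lt_m)) exprSr -{1}xl_a xl.
  by rewrite divfK ?gt_eqF.
have P_gt0 : (0 < P)%N.
  rewrite lt0n; apply/eqP => P0; apply: (single_value j); rewrite -PQ P0 add0n.
    by rewrite -x_PQ P0 mul1r.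
  by rewrite -y_PQ P0 mul1r.
have Q_gt0 : (0 < Q)%N.
  rewrite lt0n; apply/eqP => Q0; apply: (single_value i); rewrite -PQ Q0 addn0.
    by rewrite -x_PQ Q0 mulr1.
  by rewrite -y_PQ Q0 mulr1.
exists P, Q; split => //.
exact: two_value_param P_gt0 Q_gt0 ba_gt0 (x_ge0 i) (y_gt0 i) (x_ge0 j) (y_gt0 j)
  (x_add_y i) (x_add_y j) x_PQ y_PQ.
Qed.

End KEq1.

End Configuration.

Definition y_candidates (R : rcfType) (a b : R) k m : seq R :=
  rootsR (constant_y_poly a b k m) ++
  flatten [seq map (two_value_y a (m.-1 - P))
                   (rootsR (two_value_poly a (b / a) P (m.-1 - P)))
          | P <- iota 1 m.-2].

Theorem lemma4p2 (R : realType) (a b : R) (k m : nat) :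
  0 < a -> 0 < b -> (1 <= k)%N -> (k < m)%N -> a ^+ m != b ^+ k ->
  exists F : seq R,
    forall (n : nat), (m <= n.-1)%N ->
    forall x y : 'I_n -> R,
      (forall i, 0 <= x i) -> (forall i, 0 < y i) ->
      (forall I : {set 'I_n}, #|I| = k -> prodI x I + prodI y I = 2 * a) ->
      (forall J : {set 'I_n}, #|J| = m -> prodI x J + prodI y J = 2 * b) ->
      forall i, y i \in F.
Proof.
move=> a_gt0 b_gt0 k_gt0 k_lt_m am_neq_bk.
exists (y_candidates a b k m) => n m_le_n x y x_ge0 y_gt0 level_k level_m i.
have m_lt_n : (m < n)%N by lia.
rewrite mem_cat; apply/orP.
have [/forallP y_const | /forallPn [j /eqP y_ji]] := boolP [forall j, y j == y i].
  left; apply: root_mem_rootsR.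
    by apply: constant_y_poly_neq0; rewrite ?k_gt0.
  by apply: (root_constant_y k_gt0 k_lt_m m_lt_n level_k level_m) => j; apply/eqP.
have k_eq1 : k = 1%N.
  apply/eqP; rewrite eqn_leq k_gt0 andbT leqNgt; apply/negP => k_gt1.
  apply: y_ji; apply: (y_const_of_k_gt1 a_gt0 b_gt0 k_gt0 k_lt_m m_lt_n am_neq_bk
    x_ge0 y_gt0 level_k level_m k_gt1).
have y_ij : y i != y j by apply/eqP => y_ij; apply: y_ji.
have [P [Q [P_gt0 Q_gt0 PQ [z z_root y_z]]]] := two_value_root a_gt0 b_gt0 k_gt0
  k_lt_m m_lt_n am_neq_bk x_ge0 y_gt0 level_k level_m k_eq1 y_ij.
right; apply/flatten_mapP; exists P; first by rewrite mem_iota; lia.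
rewrite (_ : m.-1 - P = Q)%N; last lia.
rewrite y_z; apply: map_f; apply: root_mem_rootsR z_root.
by apply: two_value_poly_neq0; rewrite ?gt_eqF ?divr_gt0.
Qed.
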